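(* Let $C_1,C_2$ be two vertex-disjoint cycles in a graph, and let $P_1,P_2$ be two vertex-disjoint paths from $C_1$ to $C_2$, where $P_i$ has end-vertices $x_i\in V(C_1)$ and $y_i\in V(C_2)$ for $i=1,2$. If $x_1,x_2$ are mod-non-diagonal in $C_1$ and $y_1,y_2$ are mod-non-diagonal in $C_2$, then $C_1\cup C_2\cup P_1\cup P_2$ contains a cycle of length congruent to $1$ modulo $3$.
   Context: A path from a subgraph $X$ to a subgraph $Y$ is a path whose origin lies in $X$, whose terminus lies in $Y$, and all of whose internal vertices lie outside $X\cup Y$. For a cycle $C$ with an orientation, $\overrightarrow{C}[u,v]$ is the path from $u$ to $v$ along the orientation; two distinct vertices $u,v$ of $C$ are mod-diagonal in $C$ if $|\overrightarrow{C}[u,v]|\equiv|\overrightarrow{C}[v,u]|\pmod 3$ (lengths counted in edges), and mod-non-diagonal otherwise (this does not depend on the chosen orientation). *)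

From mathcomp Require Import all_boot.
Set Implicit Arguments. Unset Strict Implicit. Unset Printing Implicit Defensive.

Section Defs.
Variable T : finType.

Definition simple_graph (e : rel T) := symmetric e /\ irreflexive e.

(* a cycle given by its cyclic vertex sequence; length = size c *)
Definition is_cycle (e : rel T) (c : seq T) : bool :=
  [&& uniq c, 3 <= size c & cycle e c].

(* a path given by its vertex sequence; length = (size p).-1 *)
Definition is_path (e : rel T) (p : seq T) : bool :=
  uniq p && (if p is x :: q then path e x q else false).

Definition cycle_edges (c : seq T) : rel T :=
  fun x y => ((x, y) \in zip c (rot 1 c)) || ((y, x) \in zip c (rot 1 c)).

Definition path_edges (p : seq T) : rel T :=
  fun x y => ((x, y) \in zip p (behead p)) || ((y, x) \in zip p (behead p)).

Definition internal (p : seq T) : seq T := behead (take (size p).-1 p).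

Definition path_from_to (X Y : seq T) (p : seq T) : bool :=
  if p is x :: q then
    [&& x \in X, last x q \in Y &
        all (fun v => (v \notin X) && (v \notin Y)) (internal p)]
  else false.

(* |C[x,y]| : length of the arc from x to y following the orientation of c *)
Definition arc_len (c : seq T) (x y : T) : nat :=
  (index y c + size c - index x c) %% size c.

Definition mod_diagonal (c : seq T) (x y : T) : bool :=
  arc_len c x y %% 3 == arc_len c y x %% 3.

Definition vdisjoint (s1 s2 : seq T) : bool := all (fun v => v \notin s2) s1.

End Defs.

From mathcomp Require Import all_boot zify.

(* Cutting C1 at x1, x2 and C2 at y1, y2 gives two arcs of each cycle; P1, an
   arc of C2, P2 backwards and an arc of C1 close up into four possible cycles,
   of lengths |P1| + |P2| + a + b with a, b ranging over the arc lengths of C1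
   and C2.  Non-diagonality says that the two values of a, and the two values
   of b, are distinct mod 3, and two 2-element subsets of Z/3 have all of Z/3
   as sumset, so one of the four lengths is 1 mod 3. *)

Set Implicit Arguments.
Unset Strict Implicit.

Section ZipPaths.
Variable T : eqType.

Lemma path_zip (x : T) s t :
  path (fun a b => (a, b) \in zip (x :: s) (s ++ t)) x s.
Proof.
elim: s x => [|y s IHs] x //=; rewrite in_cons eqxx /=.
by apply: sub_path (IHs y) => a b /= ab; rewrite in_cons ab orbT.
Qed.

Lemma cycle_zip_rot (c : seq T) :
  cycle (fun a b => (a, b) \in zip c (rot 1 c)) c.
Proof.
case: c => [|x s] //; rewrite rot1_cons /= rcons_path -cats1 path_zip /=.
by rewrite cats1 lastI zip_rcons ?mem_rcons ?mem_head ?size_belast.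
Qed.

End ZipPaths.

Section SymmetricPaths.
Variables (T : eqType) (r : rel T).
Hypothesis r_sym : symmetric r.

Lemma path_rev_sym (x : T) p : path r (last x p) (rev (belast x p)) = path r x p.
Proof. by rewrite rev_path; apply: eq_path => u v; rewrite r_sym. Qed.

Lemma path_rcons_rev (x y : T) s :
  path r x (rcons s y) -> path r y (rcons (rev s) x).
Proof. by rewrite -path_rev_sym last_rcons belast_rcons rev_cons. Qed.

Lemma last_rev_belast (x : T) p : last (last x p) (rev (belast x p)) = x.
Proof. by case: p => [|y p] //=; rewrite rev_cons last_rcons. Qed.

Lemma cycle_glue (x1 x2 : T) q1 q2 A B :
  path r x1 q1 -> path r x2 q2 ->
  path r (last x1 q1) (rcons B (last x2 q2)) -> path r x2 (rcons A x1) ->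
  cycle r (x1 :: q1 ++ B ++ rev (x2 :: q2) ++ A).
Proof.
move=> p1 p2; rewrite rcons_path => /andP[pB rB] pA.
rewrite /= rcons_cat cat_path p1 rcons_cat cat_path pB /=.
rewrite lastI rev_rcons /= rB rcons_cat cat_path path_rev_sym p2 /=.
by rewrite last_rev_belast.
Qed.

End SymmetricPaths.

Lemma index_rot (T : eqType) (s : seq T) i y : uniq s -> i <= size s -> y \in s ->
  index y (rot i s) = (index y s + size s - i) %% size s.
Proof.
move=> s_uniq le_i_s y_s.
move: (s_uniq); rewrite -{1}(cat_take_drop i s) cat_uniq => /and3P[_ /hasPn td _].
have -> : index y s = if y \in take i s then index y (take i s)
                      else i + index y (drop i s).
  by rewrite -{1}(cat_take_drop i s) index_cat size_takel.
rewrite /rot index_cat size_drop; case: ifP => [yd|nyd].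
- have lt_k : index y (drop i s) < size s - i by rewrite -size_drop index_mem.
  rewrite (negbTE (td y yd)) -addnA addKn modnDr modn_small //; lia.
- have yt : y \in take i s.
    by move: y_s; rewrite -{1}(cat_take_drop i s) mem_cat nyd orbF.
  have lt_j : index y (take i s) < i.
    by rewrite -[i in _ < i](size_takel le_i_s) index_mem.
  by rewrite yt modn_small //; lia.
Qed.

Section Arcs.
Variable T : finType.

Lemma size_arc (C : seq T) x y : uniq C -> x \in C -> y \in C ->
  size (arc C x y) = arc_len C x y.
Proof.
by move=> C_uniq xC yC; rewrite /arc size_takel ?index_size // index_rot ?index_size.
Qed.

Lemma rot_split_arcs (C : seq T) x y : uniq C -> x \in C -> y \in C -> x != y ->
  exists i u w, [/\ rot i C = x :: u ++ y :: w,
                    (size u).+1 = arc_len C x y & (size w).+1 = arc_len C y x].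
Proof.
move=> C_uniq xC yC xy; case: (rot_to_arc C_uniq xC yC xy) => i u w Eu Ew Er.
by exists i, u, w; rewrite -!size_arc // -Eu -Ew.
Qed.

Variable r : rel T.

Definition arc_interior (C : seq T) (x y : T) (A : seq T) : Prop :=
  [/\ path r x (rcons A y), uniq A, {subset A <= C}, x \notin A & y \notin A].

Hypothesis r_sym : symmetric r.

Lemma cycle_two_arcs (C : seq T) x y :
  uniq C -> cycle r C -> x \in C -> y \in C -> x != y ->
  exists A A', [/\ arc_interior C x y A, arc_interior C x y A',
                   (size A).+1 = arc_len C x y & (size A').+1 = arc_len C y x].
Proof.
move=> C_uniq C_cycle xC yC xy.
have [i [u [w [Er Eu Ew]]]] := rot_split_arcs C_uniq xC yC xy.
have := C_cycle; rewrite -(rot_cycle i) Er /= rcons_cat cat_path /=.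
move=> /and3P[pu ruy pw].
have := C_uniq; rewrite -(rot_uniq i) Er !cons_uniq mem_cat in_cons cat_uniq.
rewrite cons_uniq !negb_or => /and5P[/and3P[xu _ xw] u_uniq /andP[yu _] yw w_uniq].
have sub_uw : {subset u ++ w <= C}.
  move=> v; rewrite mem_cat -(mem_rot i C) Er !(in_cons, mem_cat).
  by case/orP=> ->; rewrite ?orbT.
exists u, (rev w); split; rewrite ?size_rev //; split; rewrite ?rev_uniq ?mem_rev //.
- by rewrite rcons_path pu ruy.
- by move=> v vu; apply: sub_uw; rewrite mem_cat vu.
- exact: path_rcons_rev.
- by move=> v; rewrite mem_rev => vw; apply: sub_uw; rewrite mem_cat vw orbT.
Qed.

End Arcs.

Section GraphEdges.
Variable T : finType.

Lemma cycle_edges_sym (c : seq T) : symmetric (cycle_edges c).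
Proof. by move=> x y; rewrite /cycle_edges orbC. Qed.

Lemma path_edges_sym (p : seq T) : symmetric (path_edges p).
Proof. by move=> x y; rewrite /path_edges orbC. Qed.

Lemma cycle_cycle_edges (c : seq T) : cycle (cycle_edges c) c.
Proof. by apply: sub_cycle (cycle_zip_rot c) => x y xy; rewrite /cycle_edges xy. Qed.

Lemma path_path_edges (x : T) q : path (path_edges (x :: q)) x q.
Proof.
have := path_zip x q [::]; rewrite cats0.
by apply: sub_path => u v uv; rewrite /path_edges uv.
Qed.

Lemma mem_internal (x : T) q v : v \in x :: q -> v != x -> v != last x q ->
  v \in internal (x :: q).
Proof.
rewrite /internal /= lastI -cats1 take_size_cat ?size_belast //.
rewrite cats1 mem_rcons in_cons => /predU1P[-> _ /eqP //|].
by case: q => [|y q] //=; rewrite in_cons => /predU1P[-> /eqP|].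
Qed.

Lemma path_from_to_ends (X Y : seq T) x q :
  vdisjoint X Y -> path_from_to X Y (x :: q) ->
  [/\ x \in X, last x q \in Y,
      forall v, v \in x :: q -> v \in X -> v = x &
      forall v, v \in x :: q -> v \in Y -> v = last x q].
Proof.
move=> /allP XY /and3P[xX qY /allP qXY]; split=> // v vq vXY; apply/eqP.
  apply: contraT => vx; have [vl|vl] := eqVneq v (last x q).
    by move: (XY v vXY); rewrite vl qY.
  by have := qXY v (mem_internal vq vx vl); rewrite vXY.
apply: contraT => vl; have [vx|vx] := eqVneq v x.
  by move: (XY x xX); rewrite -vx vXY.
by have := qXY v (mem_internal vq vx vl); rewrite vXY andbF.
Qed.

Lemma path_from_to_size (X Y : seq T) x q :
  vdisjoint X Y -> path_from_to X Y (x :: q) -> 0 < size q.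
Proof.
by case: q => [|y q] // /allP XY /and3P[xX xY _]; move: (XY x xX); rewrite xY.
Qed.

End GraphEdges.

Lemma mod3_hit s a a' b b' : a %% 3 != a' %% 3 -> b %% 3 != b' %% 3 ->
  [\/ (s + a + b) %% 3 = 1, (s + a + b') %% 3 = 1,
      (s + a' + b) %% 3 = 1 | (s + a' + b') %% 3 = 1].
Proof.
move=> /eqP neq_a /eqP neq_b.
have : (s + a + b) %% 3 = 1 \/ (s + a + b') %% 3 = 1 \/
       (s + a' + b) %% 3 = 1 \/ (s + a' + b') %% 3 = 1 by lia.
by case=> [|[|[]]]; [constructor 1 | constructor 2 | constructor 3 | constructor 4].
Qed.

Section TwoCycles.
Variables (T : finType) (r : rel T) (C1 C2 : seq T) (x1 x2 : T) (q1 q2 : seq T).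

Definition glue (A B : seq T) := x1 :: q1 ++ B ++ rev (x2 :: q2) ++ A.

Lemma size_glue A B : size (glue A B) = size q1 + size q2 + (size A).+1 + (size B).+1.
Proof. by rewrite /= !size_cat size_rev /=; lia. Qed.

Lemma size_glue_ge3 A B : 0 < size q1 -> 0 < size q2 -> 3 <= size (glue A B).
Proof. by rewrite size_glue; lia. Qed.

Hypotheses (r_sym : symmetric r)
  (C1_uniq : uniq C1) (C2_uniq : uniq C2)
  (C1_cycle : cycle r C1) (C2_cycle : cycle r C2) (C12 : vdisjoint C1 C2)
  (P1_uniq : uniq (x1 :: q1)) (P2_uniq : uniq (x2 :: q2))
  (P1_path : path r x1 q1) (P2_path : path r x2 q2)
  (P12 : vdisjoint (x1 :: q1) (x2 :: q2))
  (P1_C : path_from_to C1 C2 (x1 :: q1)) (P2_C : path_from_to C1 C2 (x2 :: q2)).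
Local Notation y1 := (last x1 q1).
Local Notation y2 := (last x2 q2).

Lemma glue_uniq A B : arc_interior r C1 x2 x1 A -> arc_interior r C2 y1 y2 B ->
  uniq (glue A B).
Proof.
case=> _ A_uniq AC x2A x1A [_ B_uniq BC y1B y2B].
have [_ _ P1C1 P1C2] := path_from_to_ends C12 P1_C.
have [_ _ P2C1 P2C2] := path_from_to_ends C12 P2_C.
have /allP disjC := C12; have /allP disjP := P12.
rewrite /glue -cat_cons !cat_uniq rev_uniq P1_uniq P2_uniq A_uniq B_uniq /= andbT.
apply/and3P; split; apply/hasPn => v; rewrite ?mem_cat ?mem_rev.
- case/or3P => vs; apply/negP => vP1.
  + by move: y1B; rewrite -(P1C2 v vP1 (BC v vs)) vs.
  + by move: (disjP v vP1); rewrite vs.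
  + by move: x1A; rewrite -(P1C1 v vP1 (AC v vs)) vs.
- case/orP => vs; apply/negP => vB.
  + by move: y2B; rewrite -(P2C2 v vs (BC v vB)) vB.
  + by move: (disjC v (AC v vs)); rewrite (BC v vB).
- move=> vA; apply/negP => vP2.
  by move: x2A; rewrite -(P2C1 v vP2 (AC v vA)) vA.
Qed.

Lemma glue_cycle A B : arc_interior r C1 x2 x1 A -> arc_interior r C2 y1 y2 B ->
  is_cycle r (glue A B).
Proof.
move=> hA hB; have [pA _ _ _ _] := hA; have [pB _ _ _ _] := hB.
rewrite /is_cycle glue_uniq // cycle_glue // size_glue_ge3 //.
  exact: path_from_to_size C12 P1_C.
exact: path_from_to_size C12 P2_C.
Qed.

Lemma two_cycles_cycle_1mod3 :
  ~~ mod_diagonal C1 x1 x2 -> ~~ mod_diagonal C2 y1 y2 ->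
  exists c, is_cycle r c /\ size c %% 3 = 1.
Proof.
move=> nd1 nd2; have /allP disjP := P12.
have [x1C1 y1C2 _ _] := path_from_to_ends C12 P1_C.
have [x2C1 y2C2 _ _] := path_from_to_ends C12 P2_C.
have x21 : x2 != x1.
  by apply: contraTneq (disjP x1 (mem_head _ _)) => <-; rewrite mem_head.
have y12 : y1 != y2.
  by apply: contraTneq (disjP y1 (mem_last _ _)) => ->; rewrite mem_last.
have [A [A' [hA hA' sA sA']]] := cycle_two_arcs r_sym C1_uniq C1_cycle x2C1 x1C1 x21.
have [B [B' [hB hB' sB sB']]] := cycle_two_arcs r_sym C2_uniq C2_cycle y1C2 y2C2 y12.
rewrite /mod_diagonal -sA -sA' eq_sym in nd1; rewrite /mod_diagonal -sB -sB' in nd2.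
have glue_ok U V : arc_interior r C1 x2 x1 U -> arc_interior r C2 y1 y2 V ->
    (size q1 + size q2 + (size U).+1 + (size V).+1) %% 3 = 1 ->
    exists c, is_cycle r c /\ size c %% 3 = 1.
  by move=> hU hV hit; exists (glue U V); rewrite glue_cycle // size_glue.
by case: (mod3_hit (size q1 + size q2) nd1 nd2); apply: glue_ok.
Qed.

End TwoCycles.

Unset Implicit Arguments.
Set Strict Implicit.

Theorem lemma2p4 (T : finType) (e : rel T) (C1 C2 P1 P2 : seq T)
    (x1 x2 y1 y2 : T) :
  simple_graph e ->
  is_cycle e C1 -> is_cycle e C2 -> vdisjoint C1 C2 ->
  is_path e P1 -> is_path e P2 -> vdisjoint P1 P2 ->
  path_from_to C1 C2 P1 -> path_from_to C1 C2 P2 ->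
  ohead P1 = Some x1 -> last x1 P1 = y1 ->
  ohead P2 = Some x2 -> last x2 P2 = y2 ->
  ~~ mod_diagonal C1 x1 x2 -> ~~ mod_diagonal C2 y1 y2 ->
  exists c : seq T,
    is_cycle (fun u v => [|| cycle_edges C1 u v, cycle_edges C2 u v,
                             path_edges P1 u v | path_edges P2 u v]) c
    /\ size c %% 3 = 1.
Proof.
(* The edges of the union graph come from C1, C2, P1, P2 themselves, so of the
   hypotheses on e only the distinctness of the vertices is used. *)
move=> _ /andP[C1_uniq _] /andP[C2_uniq _] C12.
case: P1 => [|x1' q1] // /andP[P1_uniq _].
case: P2 => [|x2' q2] // /andP[P2_uniq _] P12 P1_C P2_C [<-] <- [<-] <- nd1 nd2.
apply: (@two_cycles_cycle_1mod3 _ _ C1 C2 x1' x2' q1 q2) => //.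
- by move=> u v; rewrite (cycle_edges_sym C1) (cycle_edges_sym C2)
    (path_edges_sym (x1' :: q1)) (path_edges_sym (x2' :: q2)).
- by apply: sub_cycle (cycle_cycle_edges C1) => u v ->.
- by apply: sub_cycle (cycle_cycle_edges C2) => u v ->; rewrite orbT.
- by apply: sub_path (path_path_edges x1' q1) => u v ->; rewrite !orbT.
- by apply: sub_path (path_path_edges x2' q2) => u v ->; rewrite !orbT.
Qed.
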